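(* Let $a<b$ be real numbers, let $X:=C_0[a,b]:=\{v\in C[a,b]\mid v(a)=v(b)=0\}$, let $g\in C[a,b]$ with $g\neq 0$, let $s\geq 2$ be an integer and let $p\in[1,\infty]$. Equip $X$ with the norm $\|\cdot\|_p$ (the $L^p(a,b)$-norm, with $\|\cdot\|_\infty$ the supremum norm). Then $$\lim_{h\in X,\ \|h\|_p\to 0}\ \frac{1}{\|h\|_p}\int_a^b g\,h^s=0 \quad\Longleftrightarrow\quad p\geq s .$$
   Context: Integrals $\int_a^b \varphi$ denote the Riemann integral $\int_a^b\varphi(x)\,dx$. The limit is taken over $h\in X\setminus\{0\}$ with $\|h\|_p\to 0$. *)

From Stdlib Require Import Reals.
From Coquelicot Require Import Coquelicot.
Open Scope R_scope.

Definition cont_on (a b : R) (f : R -> R) : Prop :=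
  forall x, a <= x <= b ->
    filterlim f (within (fun y => a <= y <= b) (locally x)) (locally (f x)).

Definition in_X (a b : R) (h : R -> R) : Prop :=
  cont_on a b h /\ h a = 0 /\ h b = 0.

(* real power x^q for x >= 0, with 0^q = 0 (q > 0) *)
Definition rpow (x q : R) : R :=
  if Req_EM_T x 0 then 0 else Rpower x q.

Definition sup_norm (a b : R) (h : R -> R) : R :=
  real (Lub_Rbar (fun y => exists x, a <= x <= b /\ y = Rabs (h x))).

Definition pnorm (a b : R) (p : Rbar) (h : R -> R) : R :=
  match p with
  | Finite q => rpow (RInt (fun x => rpow (Rabs (h x)) q) a b) (/ q)
  | _ => sup_norm a b h
  end.

From Stdlib Require Import Reals Lra Lia.
From Coquelicot Require Import Coquelicot.
Open Scope R_scope.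

(* For p >= s and N := |h|_p, the pointwise bound u^s <= N^s (u/N)^q + N^s (split at u = N)
   integrates to |int g h^s| <= C N^s, so the ratio is O(N^(s-1)), which vanishes as s >= 2.
   For 1 <= p = q < s, tents of height t placed where g keeps its sign, with width shrinking
   like t^(-q) so that their L^q norm stays below a fixed nu, have ratio growing like t^(s-q). *)

Definition clamp (a b x : R) : R := Rmax a (Rmin b x).

Lemma clamp_in_interval a b x : a <= b -> a <= clamp a b x <= b.
Proof. intros; unfold clamp, Rmax, Rmin; repeat destruct Rle_dec; lra. Qed.

Lemma clamp_id a b x : a <= x <= b -> clamp a b x = x.
Proof. intros; unfold clamp, Rmax, Rmin; repeat destruct Rle_dec; lra. Qed.

Lemma clamp_1_lipschitz a b x y : a <= b -> Rabs (clamp a b y - clamp a b x) <= Rabs (y - x).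
Proof.
  intros; unfold clamp, Rmax, Rmin; repeat destruct Rle_dec;
    unfold Rabs; repeat destruct Rcase_abs; lra.
Qed.

Lemma continuous_comp_clamp a b f : a <= b -> cont_on a b f ->
  forall x, continuous (fun y => f (clamp a b y)) x.
Proof.
  intros hab hf x.
  apply (filterlim_comp _ _ _ (clamp a b) f _
           (within (fun y => a <= y <= b) (locally (clamp a b x)))).
  - intros P [eps Heps]. exists eps. intros y Hy.
    apply Heps; [| now apply clamp_in_interval].
    eapply Rle_lt_trans; [apply clamp_1_lipschitz; exact hab | exact Hy].
  - apply hf, clamp_in_interval, hab.
Qed.

Lemma ex_RInt_cont_on a b f : a <= b -> cont_on a b f -> ex_RInt f a b.
Proof.
  intros hab hf.
  apply ex_RInt_ext with (fun y => f (clamp a b y)).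
  - intros x Hx. rewrite Rmin_left, Rmax_right in Hx by lra.
    now rewrite clamp_id by lra.
  - apply (ex_RInt_continuous (V := R_CompleteNormedModule)).
    intros; apply continuous_comp_clamp; auto.
Qed.

Lemma cont_on_bounded a b f : a <= b -> cont_on a b f ->
  exists M, forall x, a <= x <= b -> Rabs (f x) <= M.
Proof.
  intros hab hf.
  destruct (continuous_ab_maj_consistent (fun y => Rabs (f (clamp a b y))) a b hab)
    as [m [Hm _]].
  { intros c _. apply continuous_Rabs_comp, continuous_comp_clamp; auto. }
  exists (Rabs (f (clamp a b m))).
  intros x Hx. specialize (Hm x Hx). simpl in Hm. rewrite clamp_id in Hm; auto.
Qed.

Lemma cont_on_continuous a b f : (forall x, continuous f x) -> cont_on a b f.
Proof. intros H. apply continuous_on_forall. auto. Qed.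

Lemma cont_on_comp a b f (phi : R -> R) : cont_on a b f -> (forall y, continuous phi y) ->
  cont_on a b (fun x => phi (f x)).
Proof. intros hf hphi x Hx. eapply filterlim_comp; [apply hf, Hx | apply hphi]. Qed.

Lemma cont_on_mult a b f g : cont_on a b f -> cont_on a b g ->
  cont_on a b (fun x => f x * g x).
Proof.
  intros hf hg x Hx.
  eapply filterlim_comp_2; [apply hf, Hx | apply hg, Hx | apply (filterlim_mult (K := R_AbsRing))].
Qed.

Lemma cont_on_pow a b f n : cont_on a b f -> cont_on a b (fun x => f x ^ n).
Proof.
  intros hf; induction n as [|n IH]; simpl.
  - apply cont_on_continuous. intros; apply continuous_const.
  - now apply cont_on_mult.
Qed.

Lemma rpow_ge0 x q : 0 <= rpow x q.
Proof. unfold rpow; destruct Req_EM_T; [lra | left; apply exp_pos]. Qed.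

Lemma rpow_Rpower x q : 0 < x -> rpow x q = Rpower x q.
Proof. intros; unfold rpow; destruct Req_EM_T; auto; lra. Qed.

Lemma rpow_0 q : rpow 0 q = 0.
Proof. unfold rpow; destruct Req_EM_T; auto; lra. Qed.

Lemma rpow_lt_compat x y q : 0 <= x < y -> 0 < q -> rpow x q < rpow y q.
Proof.
  intros [[hx|<-] hxy] hq.
  - rewrite !rpow_Rpower by lra. now apply Rlt_Rpower_l.
  - rewrite rpow_0, rpow_Rpower by lra. apply exp_pos.
Qed.

Lemma rpow_le_compat x y q : 0 <= x <= y -> 0 < q -> rpow x q <= rpow y q.
Proof.
  intros [hx [hxy | <-]] hq; [left; apply rpow_lt_compat; auto | right; reflexivity].
Qed.

Lemma Rpower_inv_Rpower x q : 0 < x -> q <> 0 -> Rpower (Rpower x (/ q)) q = x.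
Proof. intros. rewrite Rpower_mult, Rinv_l, Rpower_1; auto. Qed.

Lemma Rpower_Rpower_inv x q : 0 < x -> q <> 0 -> Rpower (Rpower x q) (/ q) = x.
Proof. intros. rewrite Rpower_mult, Rinv_r, Rpower_1; auto. Qed.

Lemma Rpower_le_self x q : 0 < x <= 1 -> 1 <= q -> Rpower x q <= x.
Proof.
  intros hx hq.
  replace q with ((q - 1) + 1) by ring. rewrite Rpower_plus, Rpower_1 by lra.
  assert (hle1 : Rpower x (q - 1) <= Rpower 1 (q - 1)) by (apply Rle_Rpower_l; lra).
  unfold Rpower at 2 in hle1. rewrite ln_1, Rmult_0_r, exp_0 in hle1.
  nra.
Qed.

Lemma Rpower_unbounded e K : 0 < e -> exists t, 1 <= t /\ K <= Rpower t e.
Proof.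
  intros he. exists (Rpower (Rmax 1 K) (/ e)).
  assert (hK : 1 <= Rmax 1 K) by apply Rmax_l.
  split.
  - rewrite <- (Rpower_O (Rmax 1 K)) at 1 by lra.
    apply Rle_Rpower; [lra | left; now apply Rinv_0_lt_compat].
  - rewrite Rpower_inv_Rpower by lra. apply Rmax_r.
Qed.

Lemma continuous_rpow_abs q : 0 < q -> forall u, continuous (fun v => rpow (Rabs v) q) u.
Proof.
  intros hq u.
  destruct (Req_dec u 0) as [->|hu].
  - apply filterlim_locally. intros eps. rewrite Rabs_R0, rpow_0.
    exists (mkposreal _ (exp_pos (/ q * ln eps))). intros v Hv.
    change (Rabs (v - 0) < Rpower eps (/ q)) in Hv. change (Rabs (rpow (Rabs v) q - 0) < eps).
    rewrite Rminus_0_r in *. rewrite Rabs_pos_eq by apply rpow_ge0.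
    rewrite <- (Rpower_inv_Rpower eps q), <- (rpow_Rpower (Rpower _ _)) by
      (apply cond_pos || lra || apply exp_pos).
    apply rpow_lt_compat; auto. split; [apply Rabs_pos | exact Hv].
  - apply continuous_ext_loc with (fun v => exp (q * ln (Rabs v))).
    + exists (mkposreal _ (Rabs_pos_lt _ hu)). intros v Hv.
      change (Rabs (v - u) < Rabs u) in Hv.
      rewrite rpow_Rpower; [reflexivity|].
      apply Rabs_pos_lt. intros ->. rewrite Rminus_0_l, Rabs_Ropp in Hv. lra.
    + apply continuous_exp_comp, (continuous_mult (K := R_AbsRing)); [apply continuous_const|].
      apply continuous_comp; [apply continuous_Rabs | apply continuous_ln, Rabs_pos_lt, hu].
Qed.

Lemma cont_on_rpow_abs a b f q : 0 < q -> cont_on a b f ->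
  cont_on a b (fun x => rpow (Rabs (f x)) q).
Proof.
  intros hq hf. now apply (cont_on_comp a b f (fun v => rpow (Rabs v) q)), continuous_rpow_abs.
Qed.

Lemma Rabs_le_sup_norm a b h : a <= b -> cont_on a b h ->
  forall x, a <= x <= b -> Rabs (h x) <= sup_norm a b h.
Proof.
  intros hab hh x Hx.
  destruct (cont_on_bounded a b h hab hh) as [M HM].
  unfold sup_norm.
  set (E := fun y => exists x, a <= x <= b /\ y = Rabs (h x)).
  destruct (Lub_Rbar_correct E) as [Hub Hlub].
  assert (HE : Rbar_le (Rabs (h x)) (Lub_Rbar E)) by (apply Hub; now exists x).
  assert (HL : Rbar_le (Lub_Rbar E) M) by (apply Hlub; intros y [z [Hz ->]]; apply HM, Hz).
  destruct (Lub_Rbar E); simpl in *; easy.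
Qed.

Lemma pnorm_ge0 a b p h : a <= b -> cont_on a b h -> 0 <= pnorm a b p h.
Proof.
  intros hab hh. destruct p; simpl; try apply rpow_ge0;
    (eapply Rle_trans; [apply (Rabs_pos (h a)) | apply Rabs_le_sup_norm; auto; lra]).
Qed.

Definition vanishing_ratio (a b : R) (g : R -> R) (s : nat) (p : Rbar) : Prop :=
  forall eps : R, 0 < eps -> exists delta : R, 0 < delta /\
    forall h : R -> R, in_X a b h ->
      (exists x, a <= x <= b /\ h x <> 0) ->
      pnorm a b p h < delta ->
      Rabs (/ pnorm a b p h * RInt (fun x => g x * h x ^ s) a b) < eps.

Lemma pow_le_rpow_scaled (u lam q : R) (s : nat) : 0 <= u -> 0 < lam -> INR s <= q ->
  u ^ s <= lam ^ s * (rpow u q / Rpower lam q) + lam ^ s.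
Proof.
  intros hu hlam hsq.
  assert (hlam_q : 0 < Rpower lam q) by apply exp_pos.
  assert (hlam_s : 0 < lam ^ s) by (apply pow_lt; lra).
  destruct (Rle_lt_dec u lam) as [Hle|Hlt].
  - assert (0 <= rpow u q / Rpower lam q) by (apply Rdiv_le_0_compat; [apply rpow_ge0 | lra]).
    assert (u ^ s <= lam ^ s) by (apply pow_incr; lra).
    nra.
  - assert (hy : 1 < u / lam) by (apply Rlt_div_r; lra).
    assert (Hs : u ^ s = lam ^ s * (u / lam) ^ s).
    { rewrite <- Rpow_mult_distr. f_equal. field. lra. }
    assert (Hq : rpow u q / Rpower lam q = Rpower (u / lam) q).
    { rewrite rpow_Rpower by lra. replace u with (u / lam * lam) at 1 by (field; lra).
      rewrite <- Rpower_mult_distr by (try apply Rdiv_lt_0_compat; lra). field. lra. }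
    assert ((u / lam) ^ s <= Rpower (u / lam) q).
    { rewrite <- Rpower_pow by lra. apply Rle_Rpower; lra. }
    rewrite Hs, Hq. nra.
Qed.

Lemma abs_RInt_mul_pow_le a b g h s G Phi : a <= b -> cont_on a b g -> cont_on a b h ->
  ex_RInt Phi a b -> (forall x, a <= x <= b -> Rabs (g x) <= G) ->
  (forall x, a <= x <= b -> Rabs (h x) ^ s <= Phi x) ->
  Rabs (RInt (fun x => g x * h x ^ s) a b) <= G * RInt Phi a b.
Proof.
  intros hab hg hh hPhi hG hhPhi.
  assert (hgh : cont_on a b (fun x => g x * h x ^ s)) by (apply cont_on_mult, cont_on_pow; auto).
  eapply Rle_trans; [apply abs_RInt_le; auto; now apply ex_RInt_cont_on |].
  rewrite <- (RInt_scal (V := R_CompleteNormedModule)) by auto.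
  apply RInt_le; auto.
  - apply ex_RInt_cont_on, (cont_on_comp a b _ Rabs); auto. apply continuous_Rabs.
  - apply (ex_RInt_scal (V := R_NormedModule)), hPhi.
  - intros x Hx. rewrite Rabs_mult, <- RPow_abs.
    apply Rmult_le_compat; try apply Rabs_pos; try apply pow_le, Rabs_pos;
      [apply hG | apply hhPhi]; lra.
Qed.

Lemma abs_RInt_mul_pow_le_Lq_norm a b g h s q G : a <= b -> cont_on a b g -> cont_on a b h ->
  0 < q -> INR s <= q -> (forall x, a <= x <= b -> Rabs (g x) <= G) ->
  0 < pnorm a b (Finite q) h ->
  Rabs (RInt (fun x => g x * h x ^ s) a b) <= G * (1 + (b - a)) * pnorm a b (Finite q) h ^ s.
Proof.
  intros hab hg hh hq hsq hG hN. simpl in *.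
  set (F := fun x => rpow (Rabs (h x)) q) in *.
  assert (hF : ex_RInt F a b) by now apply ex_RInt_cont_on, cont_on_rpow_abs.
  set (I := RInt F a b) in *.
  assert (hI : 0 < I).
  { destruct (RInt_ge_0 F a b hab hF (fun x _ => rpow_ge0 _ _)) as [hI | hI]; auto.
    fold I in hI. rewrite <- hI, rpow_0 in hN. lra. }
  rewrite rpow_Rpower in * by exact hI.
  set (N := Rpower I (/ q)) in *.
  assert (HNq : Rpower N q = I) by (apply Rpower_inv_Rpower; lra).
  set (Phi := fun x => plus (scal (N ^ s / I) (F x)) (N ^ s)).
  assert (hPhi : ex_RInt Phi a b).
  { apply (ex_RInt_plus (V := R_NormedModule));
      [apply (ex_RInt_scal (V := R_NormedModule)), hF | apply ex_RInt_const]. }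
  eapply Rle_trans; [apply (abs_RInt_mul_pow_le a b g h s G Phi); auto |].
  - intros x Hx. unfold Phi, plus, scal; simpl; unfold mult; simpl.
    replace (N ^ s / I * F x) with (N ^ s * (F x / Rpower N q)) by (rewrite HNq; field; lra).
    apply pow_le_rpow_scaled; auto. apply Rabs_pos.
  - unfold Phi.
    rewrite (RInt_plus (V := R_CompleteNormedModule)), (RInt_scal (V := R_CompleteNormedModule)),
      RInt_const; auto; [| apply (ex_RInt_scal (V := R_NormedModule)), hF | apply ex_RInt_const].
    unfold plus, scal; simpl; unfold mult; simpl. fold I.
    right. field. lra.
Qed.

Lemma abs_RInt_mul_pow_le_sup_norm a b g h s G : a <= b -> cont_on a b g -> cont_on a b h ->
  (forall x, a <= x <= b -> Rabs (g x) <= G) ->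
  Rabs (RInt (fun x => g x * h x ^ s) a b) <= G * (b - a) * sup_norm a b h ^ s.
Proof.
  intros hab hg hh hG.
  eapply Rle_trans.
  - apply (abs_RInt_mul_pow_le a b g h s G (fun _ => sup_norm a b h ^ s)); auto.
    + apply ex_RInt_const.
    + intros x Hx. apply pow_incr. split; [apply Rabs_pos | now apply Rabs_le_sup_norm].
  - rewrite RInt_const. unfold scal; simpl; unfold mult; simpl. right; ring.
Qed.

Lemma abs_RInt_mul_pow_le_pnorm a b g s p : a <= b -> cont_on a b g -> (1 <= s)%nat ->
  Rbar_le (INR s) p ->
  exists C, 0 <= C /\ forall h, cont_on a b h -> 0 < pnorm a b p h ->
    Rabs (RInt (fun x => g x * h x ^ s) a b) <= C * pnorm a b p h ^ s.
Proof.
  intros hab hg hs hsp.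
  destruct (cont_on_bounded a b g hab hg) as [G HG].
  assert (hG : 0 <= G) by (eapply Rle_trans; [apply (Rabs_pos (g a)) | apply HG; lra]).
  destruct p as [q| |]; simpl in hsp; try contradiction.
  - exists (G * (1 + (b - a))). split; [apply Rmult_le_pos; lra |].
    intros h hh hN. apply abs_RInt_mul_pow_le_Lq_norm; auto.
    apply le_INR in hs. simpl in hs. lra.
  - exists (G * (b - a)). split; [apply Rmult_le_pos; lra |].
    intros h hh _. now apply abs_RInt_mul_pow_le_sup_norm.
Qed.

Lemma vanishing_ratio_of_le a b g s p : a <= b -> cont_on a b g -> (2 <= s)%nat ->
  Rbar_le (INR s) p -> vanishing_ratio a b g s p.
Proof.
  intros hab hg hs hsp eps heps.
  destruct (abs_RInt_mul_pow_le_pnorm a b g s p hab hg ltac:(lia) hsp) as [C [hC HC]].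
  exists (Rmin 1 (eps / (C + 1))). split; [apply Rmin_pos, Rdiv_lt_0_compat; lra |].
  intros h [hh _] _ hN.
  (* [/ 0 = 0] makes the ratio 0 when the norm vanishes. *)
  destruct (pnorm_ge0 a b p h hab hh) as [hN0 | <-].
  2: { rewrite Rinv_0, Rmult_0_l, Rabs_R0. exact heps. }
  specialize (HC h hh hN0).
  set (N := pnorm a b p h) in *.
  assert (N < 1) by (eapply Rlt_le_trans; [exact hN | apply Rmin_l]).
  assert ((C + 1) * N < eps).
  { apply (Rmult_lt_reg_r (/ (C + 1))); [apply Rinv_0_lt_compat; lra |].
    replace ((C + 1) * N * / (C + 1)) with N by (field; lra).
    eapply Rlt_le_trans; [exact hN | apply Rmin_r]. }
  assert (N ^ s <= N * N).
  { replace s with (S (S (s - 2))) by lia. simpl.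
    assert (N ^ (s - 2) <= 1) by (rewrite <- (pow1 (s - 2)); apply pow_incr; lra).
    nra. }
  rewrite Rabs_mult, Rabs_inv, Rabs_pos_eq by lra.
  apply (Rmult_lt_reg_l N); auto.
  rewrite <- Rmult_assoc, Rinv_r, Rmult_1_l by lra.
  nra.
Qed.

Lemma continuous_of_lipschitz (f : R -> R) K :
  (forall x z, Rabs (f x - f z) <= K * Rabs (x - z)) -> forall x, continuous f x.
Proof.
  intros hf x. apply filterlim_locally. intros eps.
  assert (hK : 0 < Rabs K + 1) by (pose proof (Rabs_pos K); lra).
  exists (mkposreal _ (Rdiv_lt_0_compat _ _ (cond_pos eps) hK)). intros y Hy.
  change (Rabs (y - x) < eps / (Rabs K + 1)) in Hy. change (Rabs (f y - f x) < eps).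
  assert ((Rabs K + 1) * Rabs (y - x) < eps).
  { apply (Rmult_lt_reg_r (/ (Rabs K + 1))); [now apply Rinv_0_lt_compat |].
    replace ((Rabs K + 1) * Rabs (y - x) * / (Rabs K + 1)) with (Rabs (y - x)) by (field; lra).
    exact Hy. }
  pose proof (hf y x). pose proof (Rle_abs K). pose proof (Rabs_pos (y - x)). nra.
Qed.

Definition tent (c w t x : R) : R := t * Rmax 0 (1 - Rabs (x - c) / w).

Lemma continuous_tent c w t x : continuous (tent c w t) x.
Proof.
  apply continuous_of_lipschitz with (Rabs t * Rabs (/ w)). clear x. intros x z.
  unfold tent. rewrite <- Rmult_minus_distr_l, Rabs_mult, Rmult_assoc.
  apply Rmult_le_compat_l; [apply Rabs_pos |].
  apply Rle_trans with (Rabs ((Rabs (z - c) - Rabs (x - c)) * / w)).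
  { unfold Rdiv. set (u := Rabs (x - c) * / w). set (v := Rabs (z - c) * / w).
    replace ((Rabs (z - c) - Rabs (x - c)) * / w) with ((1 - u) - (1 - v)) by (unfold u, v; ring).
    unfold Rmax, Rabs; repeat destruct Rle_dec; repeat destruct Rcase_abs; lra. }
  rewrite Rabs_mult, Rmult_comm. apply Rmult_le_compat_l; [apply Rabs_pos |].
  replace (x - z) with ((x - c) - (z - c)) by ring.
  rewrite <- Rabs_Ropp, Ropp_minus_distr. apply Rabs_triang_inv2.
Qed.

Section Tent.
Variables (c w t : R).
Hypotheses (hw : 0 < w) (ht : 0 <= t).

Lemma tent_ge0 x : 0 <= tent c w t x.
Proof. unfold tent, Rmax; destruct Rle_dec; nra. Qed.

Lemma tent_le x : tent c w t x <= t.
Proof.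
  unfold tent, Rmax. assert (0 <= Rabs (x - c) / w) by (apply Rdiv_le_0_compat, hw; apply Rabs_pos).
  destruct Rle_dec; nra.
Qed.

Lemma tent_center : tent c w t c = t.
Proof.
  unfold tent, Rmax. rewrite Rminus_eq_0, Rabs_R0, Rdiv_0_l, Rminus_0_r.
  destruct Rle_dec; lra.
Qed.

Lemma tent_eq0 x : w <= Rabs (x - c) -> tent c w t x = 0.
Proof.
  intros hx. unfold tent, Rmax.
  assert (1 <= Rabs (x - c) / w) by (apply Rle_div_r; lra).
  destruct Rle_dec; [replace (1 - Rabs (x - c) / w) with 0 by lra |]; ring.
Qed.

Lemma tent_ge_half x : Rabs (x - c) <= w / 2 -> t / 2 <= tent c w t x.
Proof.
  intros hx. unfold tent, Rmax.
  assert (Rabs (x - c) / w <= / 2) by (apply Rle_div_l; lra).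
  destruct Rle_dec; nra.
Qed.

Lemma tent_in_X a b : a <= c - w -> c + w <= b -> in_X a b (tent c w t).
Proof.
  intros hac hcb. split; [apply cont_on_continuous, continuous_tent |].
  split; apply tent_eq0.
  - rewrite Rabs_left; lra.
  - rewrite Rabs_pos_eq; lra.
Qed.

End Tent.

Lemma RInt_Chasles_3 a b u v (f : R -> R) : a <= u <= v -> v <= b -> ex_RInt f a b ->
  ex_RInt f a u /\ ex_RInt f u v /\ ex_RInt f v b /\
  RInt f a b = RInt f a u + RInt f u v + RInt f v b.
Proof.
  intros huv hvb hf.
  assert (hav : ex_RInt f a v)
    by (apply (ex_RInt_Chasles_1 (V := R_CompleteNormedModule)) with b; auto; lra).
  assert (hau : ex_RInt f a u)
    by (apply (ex_RInt_Chasles_1 (V := R_CompleteNormedModule)) with v; auto).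
  assert (huv' : ex_RInt f u v)
    by (apply (ex_RInt_Chasles_2 (V := R_CompleteNormedModule)) with a; auto).
  assert (hvb' : ex_RInt f v b)
    by (apply (ex_RInt_Chasles_2 (V := R_CompleteNormedModule)) with a; auto; lra).
  repeat split; auto.
  rewrite <- (RInt_Chasles (V := R_CompleteNormedModule) f a v b),
    <- (RInt_Chasles (V := R_CompleteNormedModule) f a u v) by auto.
  reflexivity.
Qed.

Lemma RInt_ge_on_subinterval a b u v (f : R -> R) K : a <= u <= v -> v <= b -> ex_RInt f a b ->
  (forall x, a < x < b -> 0 <= f x) -> (forall x, u < x < v -> K <= f x) ->
  K * (v - u) <= RInt f a b.
Proof.
  intros huv hvb hf hf0 hK.
  destruct (RInt_Chasles_3 a b u v f huv hvb hf) as [hau [huv' [hvb' ->]]].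
  assert (0 <= RInt f a u) by (apply RInt_ge_0; [lra | exact hau | intros; apply hf0; lra]).
  assert (0 <= RInt f v b) by (apply RInt_ge_0; [lra | exact hvb' | intros; apply hf0; lra]).
  assert (RInt (fun _ => K) u v <= RInt f u v)
    by (apply RInt_le; [lra | apply ex_RInt_const | exact huv' | exact hK]).
  rewrite RInt_const in *. unfold scal in *; simpl in *; unfold mult in *; simpl in *.
  lra.
Qed.

Lemma RInt_le_on_subinterval a b u v (f : R -> R) K : a <= u <= v -> v <= b -> ex_RInt f a b ->
  (forall x, a < x < b -> (x <= u \/ v <= x) -> f x <= 0) -> (forall x, u < x < v -> f x <= K) ->
  RInt f a b <= K * (v - u).
Proof.
  intros huv hvb hf hf0 hK.
  destruct (RInt_Chasles_3 a b u v f huv hvb hf) as [hau [huv' [hvb' ->]]].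
  assert (RInt f a u <= RInt (fun _ => 0) a u)
    by (apply RInt_le; [lra | exact hau | apply ex_RInt_const | intros; apply hf0; lra]).
  assert (RInt f v b <= RInt (fun _ => 0) v b)
    by (apply RInt_le; [lra | exact hvb' | apply ex_RInt_const | intros; apply hf0; lra]).
  assert (RInt f u v <= RInt (fun _ => K) u v)
    by (apply RInt_le; [lra | exact huv' | apply ex_RInt_const | exact hK]).
  rewrite !RInt_const in *. unfold scal in *; simpl in *; unfold mult in *; simpl in *.
  lra.
Qed.

Section TentIntegrals.
Variables (a b c w t : R).
Hypotheses (hw : 0 < w) (ht : 0 < t) (hac : a <= c - w) (hcb : c + w <= b).

Lemma RInt_rpow_tent_bounds q : 0 < q ->
  Rpower (t / 2) q * w <= RInt (fun x => rpow (Rabs (tent c w t x)) q) a b <= Rpower t q * (2 * w).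
Proof.
  intros hq.
  assert (hi : ex_RInt (fun x => rpow (Rabs (tent c w t x)) q) a b).
  { apply ex_RInt_cont_on; [lra |].
    now apply cont_on_rpow_abs, cont_on_continuous, continuous_tent. }
  split.
  - replace (Rpower (t / 2) q * w) with (Rpower (t / 2) q * ((c + w / 2) - (c - w / 2))) by field.
    apply RInt_ge_on_subinterval; auto; try lra.
    + intros; apply rpow_ge0.
    + intros x Hx.
      assert (Hh : t / 2 <= tent c w t x) by (apply tent_ge_half, Rabs_le_between'; lra).
      rewrite <- rpow_Rpower by lra. apply rpow_le_compat; auto.
      rewrite Rabs_pos_eq; lra.
  - replace (Rpower t q * (2 * w)) with (Rpower t q * ((c + w) - (c - w))) by ring.
    apply RInt_le_on_subinterval; auto; try lra.
    + intros x _ Hx. rewrite tent_eq0, Rabs_R0, rpow_0; try lra.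
      unfold Rabs; destruct Rcase_abs; lra.
    + intros x _. rewrite <- rpow_Rpower by lra. apply rpow_le_compat; auto.
      pose proof (tent_ge0 c w t ltac:(lra) x). pose proof (tent_le c w t hw ltac:(lra) x).
      rewrite Rabs_pos_eq; lra.
Qed.

Lemma pnorm_tent_bounds q : 0 < q ->
  0 < pnorm a b (Finite q) (tent c w t) <= Rpower (Rpower t q * (2 * w)) (/ q).
Proof.
  intros hq. simpl.
  destruct (RInt_rpow_tent_bounds q hq) as [Hlo Hhi].
  assert (hI : 0 < RInt (fun x => rpow (Rabs (tent c w t x)) q) a b).
  { eapply Rlt_le_trans; [| exact Hlo]. apply Rmult_lt_0_compat; [apply exp_pos | exact hw]. }
  rewrite rpow_Rpower by exact hI.
  split; [apply exp_pos |].
  apply Rle_Rpower_l; [left; now apply Rinv_0_lt_compat | lra].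
Qed.

Lemma RInt_mul_tent_pow_ge g s m : cont_on a b g -> (1 <= s)%nat -> 0 <= m ->
  (forall y, c - w <= y <= c + w -> m <= g y) ->
  m * (t / 2) ^ s * w <= RInt (fun x => g x * tent c w t x ^ s) a b.
Proof.
  intros hg hs hm hgm.
  assert (hh : forall x, 0 <= tent c w t x) by (apply tent_ge0; lra).
  replace (m * (t / 2) ^ s * w) with (m * (t / 2) ^ s * ((c + w / 2) - (c - w / 2))) by field.
  apply RInt_ge_on_subinterval; try lra.
  - apply ex_RInt_cont_on; [lra |].
    now apply cont_on_mult, cont_on_pow, cont_on_continuous, continuous_tent.
  - intros x Hx. destruct (Rlt_le_dec (Rabs (x - c)) w) as [Hin | Hout].
    + apply Rabs_lt_between' in Hin.
      apply Rmult_le_pos; [apply Rle_trans with m; auto; apply hgm; lra | apply pow_le, hh].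
    + rewrite tent_eq0, pow_i by (lra || lia). lra.
  - intros x Hx.
    assert (Hh : t / 2 <= tent c w t x) by (apply tent_ge_half, Rabs_le_between'; lra).
    apply Rmult_le_compat; [lra | apply pow_le; lra | apply hgm; lra | apply pow_incr; lra].
Qed.

End TentIntegrals.

Lemma vanishing_ratio_opp a b g s p : a <= b -> cont_on a b g ->
  vanishing_ratio a b g s p -> vanishing_ratio a b (fun x => - g x) s p.
Proof.
  intros hab hg H eps heps.
  destruct (H eps heps) as [delta [hdelta Hdelta]].
  exists delta. split; auto. intros h hX hnz hN.
  assert (hi : ex_RInt (fun x => g x * h x ^ s) a b)
    by (apply ex_RInt_cont_on, cont_on_mult, cont_on_pow; auto; apply hX).
  rewrite (RInt_ext (V := R_CompleteNormedModule) _ (fun x => opp (g x * h x ^ s)))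
    by (intros; unfold opp; simpl; ring).
  rewrite (RInt_opp (V := R_CompleteNormedModule)) by exact hi.
  unfold opp; simpl. rewrite <- Ropp_mult_distr_r, Rabs_Ropp.
  now apply Hdelta.
Qed.

Lemma cont_on_ge_half_near a b g x0 : a < b -> cont_on a b g -> a <= x0 <= b -> 0 < g x0 ->
  exists c r, 0 < r /\ a <= c - r /\ c + r <= b /\
    forall y, c - r <= y <= c + r -> g x0 / 2 <= g y.
Proof.
  intros hab hg hx0 hgx0.
  destruct (proj1 (filterlim_locally _ _) (hg x0 hx0) (mkposreal (g x0 / 2) ltac:(lra)))
    as [d Hd].
  pose proof (cond_pos d).
  set (r := Rmin (d / 4) ((b - a) / 4)).
  assert (hr : 0 < r /\ r <= d / 4 /\ r <= (b - a) / 4)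
    by (unfold r, Rmin; destruct Rle_dec; lra).
  clearbody r.
  assert (Hnear : forall y, a <= y <= b -> Rabs (y - x0) <= 2 * r -> g x0 / 2 <= g y).
  { intros y Hy Hyx.
    assert (Hball : Rabs (g y - g x0) < g x0 / 2)
      by (apply Hd; [change (Rabs (y - x0) < d); lra | exact Hy]).
    apply Rabs_lt_between' in Hball. lra. }
  destruct (Rle_dec (x0 + 2 * r) b).
  - exists (x0 + r), r. repeat split; try lra.
    intros y Hy. apply Hnear; [lra | apply Rabs_le_between'; lra].
  - exists (x0 - r), r. repeat split; try lra.
    intros y Hy. apply Hnear; [lra | apply Rabs_le_between'; lra].
Qed.

Lemma tent_ratio_scaling m nu t q s : 0 < nu -> 0 < t ->
  / nu * (m * (t / 2) ^ s * (Rpower (nu / t) q / 2))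
  = m / 2 ^ S s * Rpower nu (q - 1) * Rpower t (INR s - q).
Proof.
  intros hnu ht.
  assert (Hnu_t : Rpower (nu / t) q = Rpower nu q / Rpower t q).
  { assert (0 < Rpower t q) by apply exp_pos.
    replace (Rpower nu q) with (Rpower (nu / t) q * Rpower t q).
    - field. lra.
    - rewrite Rpower_mult_distr by (try apply Rdiv_lt_0_compat; lra). f_equal. field. lra. }
  unfold Rminus. rewrite Hnu_t, !Rpower_plus, !Rpower_Ropp, Rpower_1, Rpower_pow by lra.
  simpl. unfold Rdiv. rewrite Rpow_mult_distr, pow_inv.
  assert (0 < Rpower t q) by apply exp_pos. assert (0 < 2 ^ s) by (apply pow_lt; lra).
  field. lra.
Qed.

(* The width (nu/t)^q / 2 keeps the L^q norm of the tent of height t below nu. *)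
Lemma exists_tent_with_large_ratio a b g s q c r m nu t : (1 <= s)%nat -> 1 <= q ->
  cont_on a b g -> a <= c - r -> c + r <= b -> 0 <= m ->
  (forall y, c - r <= y <= c + r -> m <= g y) -> 0 < nu <= 1 -> nu <= r -> 1 <= t ->
  exists h, in_X a b h /\ (exists x, a <= x <= b /\ h x <> 0) /\
    0 < pnorm a b (Finite q) h <= nu /\
    m / 2 ^ S s * Rpower nu (q - 1) * Rpower t (INR s - q)
      <= / pnorm a b (Finite q) h * RInt (fun x => g x * h x ^ s) a b.
Proof.
  intros hs hq1 hg hac hcb hm hgm hnu hnur ht.
  assert (hnut : 0 < nu / t <= nu) by (split; [apply Rdiv_lt_0_compat | apply Rle_div_l]; nra).
  set (w := Rpower (nu / t) q / 2).
  assert (hw : 0 < w) by (unfold w; pose proof (exp_pos (q * ln (nu / t))); unfold Rpower; lra).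
  assert (hwr : w <= r) by (unfold w; pose proof (Rpower_le_self (nu / t) q ltac:(lra) hq1); lra).
  assert (hnorm : Rpower t q * (2 * w) = Rpower nu q).
  { unfold w. replace (2 * (Rpower (nu / t) q / 2)) with (Rpower (nu / t) q) by field.
    rewrite Rpower_mult_distr by lra. f_equal. field. lra. }
  exists (tent c w t). split; [apply tent_in_X; lra |].
  split; [exists c; rewrite tent_center; split; lra |].
  destruct (pnorm_tent_bounds a b c w t hw ltac:(lra) ltac:(lra) ltac:(lra) q ltac:(lra))
    as [hN0 hN].
  rewrite hnorm, Rpower_Rpower_inv in hN by lra.
  split; [lra |].
  assert (hX : m * (t / 2) ^ s * w <= RInt (fun x => g x * tent c w t x ^ s) a b).
  { apply RInt_mul_tent_pow_ge; auto; try lra. intros y Hy. apply hgm. lra. }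
  assert (hX0 : 0 <= m * (t / 2) ^ s * w).
  { apply Rmult_le_pos; [apply Rmult_le_pos; [lra | apply pow_le; lra] | lra]. }
  unfold w at 1. rewrite <- tent_ratio_scaling by lra. fold w.
  apply Rle_trans with (/ nu * RInt (fun x => g x * tent c w t x ^ s) a b).
  - apply Rmult_le_compat_l; [left; apply Rinv_0_lt_compat |]; lra.
  - apply Rmult_le_compat_r; [lra | apply Rinv_le_contravar; lra].
Qed.

Lemma not_vanishing_ratio_of_ge_on a b g s q c r m : (1 <= s)%nat -> 1 <= q -> q < INR s ->
  cont_on a b g -> 0 < r -> a <= c - r -> c + r <= b -> 0 < m ->
  (forall y, c - r <= y <= c + r -> m <= g y) -> ~ vanishing_ratio a b g s (Finite q).
Proof.
  intros hs hq1 hqs hg hr hac hcb hm hgm H.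
  destruct (H 1 Rlt_0_1) as [delta [hdelta Hdelta]].
  set (nu := Rmin (delta / 2) (Rmin 1 r)).
  assert (hnu : 0 < nu /\ nu < delta /\ nu <= 1 /\ nu <= r)
    by (unfold nu, Rmin; repeat destruct Rle_dec; lra).
  clearbody nu. destruct hnu as [hnu0 [hnu_delta [hnu1 hnur]]].
  set (A := m / 2 ^ S s * Rpower nu (q - 1)).
  assert (hA : 0 < A).
  { apply Rmult_lt_0_compat; [apply Rdiv_lt_0_compat; [lra | apply pow_lt; lra] | apply exp_pos]. }
  destruct (Rpower_unbounded (INR s - q) (/ A)) as [t [ht HtA]]; [lra |].
  destruct (exists_tent_with_large_ratio a b g s q c r m nu t) as [h [hX [hnz [hN Hratio]]]];
    auto; try lra.
  fold A in Hratio.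
  assert (Hlt := Hdelta h hX hnz ltac:(lra)).
  assert (1 <= A * Rpower t (INR s - q)).
  { apply (Rmult_le_reg_l (/ A)); [now apply Rinv_0_lt_compat |].
    rewrite Rmult_1_r, <- Rmult_assoc, Rinv_l, Rmult_1_l by lra. exact HtA. }
  pose proof (Rle_abs (/ pnorm a b (Finite q) h * RInt (fun x => g x * h x ^ s) a b)).
  lra.
Qed.

Lemma not_vanishing_ratio_of_lt a b g s q : a < b -> cont_on a b g ->
  (exists x, a <= x <= b /\ g x <> 0) -> (1 <= s)%nat -> 1 <= q -> q < INR s ->
  ~ vanishing_ratio a b g s (Finite q).
Proof.
  intros hab hg [x0 [hx0 hgx0]] hs hq1 hqs.
  assert (Hpos : forall f, cont_on a b f -> 0 < f x0 -> ~ vanishing_ratio a b f s (Finite q)).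
  { intros f hf hfx0.
    destruct (cont_on_ge_half_near a b f x0 hab hf hx0 hfx0) as [c [r [hr [hac [hcb Hfr]]]]].
    apply (not_vanishing_ratio_of_ge_on a b f s q c r (f x0 / 2)); auto; lra. }
  destruct (Rlt_le_dec 0 (g x0)) as [hpos | hneg]; [now apply Hpos |].
  intros H. apply (Hpos (fun x => - g x)).
  - apply (cont_on_comp a b g Ropp); auto.
    intros y. apply (continuous_opp (V := R_NormedModule)), continuous_id.
  - lra.
  - apply vanishing_ratio_opp; auto; lra.
Qed.

Theorem lemma1 (a b : R) (g : R -> R) (s : nat) (p : Rbar) :
  a < b ->
  cont_on a b g ->
  (exists x, a <= x <= b /\ g x <> 0) ->
  (2 <= s)%nat ->
  Rbar_le (Finite 1) p ->
  ((forall eps : R, 0 < eps -> exists delta : R, 0 < delta /\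
      forall h : R -> R, in_X a b h ->
        (exists x, a <= x <= b /\ h x <> 0) ->
        pnorm a b p h < delta ->
        Rabs (/ pnorm a b p h * RInt (fun x => g x * h x ^ s) a b) < eps)
   <-> Rbar_le (Finite (INR s)) p).
Proof.
  intros hab hg hgx hs hp1. split.
  - intros H. destruct p as [q| |]; simpl in hp1 |- *; try easy.
    destruct (Rle_lt_dec (INR s) q) as [hsq | hqs]; auto.
    exfalso. apply (not_vanishing_ratio_of_lt a b g s q); auto; lia.
  - intros hsp. apply vanishing_ratio_of_le; auto; lra.
Qed.
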